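(* Let $p$ be a prime. Let $X$ be a finite group with a core-free subgroup $Y$ and a normal subgroup $N$; let $G=X/N$ with quotient map $x\mapsto\overline{x}$ and let $H=\overline{Y}$. Suppose $H$ is core-free in $G$ and that $G$, acting transitively on the right cosets of $H$, is not $p$-elusive. If $X$, acting transitively on the right cosets of $Y$, is $p$-elusive, then $X$ does not split over $N$ (that is, $N$ has no complement in $X$).
   Context: A derangement is a permutation with no fixed points. For a prime $p$, a transitive permutation group is $p$-elusive if it has no derangements of order $p$. *)

From HB Require Import structures.
From mathcomp Require Import all_boot all_fingroup.
Set Implicit Arguments. Unset Strict Implicit. Unset Printing Implicit Defensive.
Local Open Scope group_scope.

Section Elusive.
Variable gT : finGroupType.

Definition derangement (G H : {set gT}) (g : gT) : bool :=
  [forall C in rcosets H G, C :* g != C].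

Definition p_elusive (p : nat) (G H : {set gT}) : bool :=
  [forall g in G, (#[g] == p) ==> ~~ derangement G H g].

Definition core_free (H G : {set gT}) : bool := gcore H G == 1.
End Elusive.

From HB Require Import structures.
From mathcomp Require Import all_boot all_fingroup.
Local Open Scope group_scope.

(* An element g fixes the coset H x exactly when x g x^-1 lies in H, so the
   quotient map sends a fixed coset of Y to a fixed coset of Y / N.  If K
   complements N in X, the quotient map is an isomorphism from K onto X / N,
   so every element of order p of X / N is the image of an element of order p
   of X.  Hence a splitting of X over N carries p-elusiveness from X to X / N. *)

Lemma rcoset_fixedE (gT : finGroupType) (H : {group gT}) (x g : gT) :
  (H :* x :* g == H :* x) = (x * g * x^-1 \in H).
Proof. by rewrite -rcosetM -mem_rcoset; apply/eqP/idP => /rcoset_eqP. Qed.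

Lemma derangementPn (gT : finGroupType) (G H : {group gT}) (g : gT) :
  reflect (exists2 x, x \in G & x * g * x^-1 \in H) (~~ derangement G H g).
Proof.
rewrite /derangement negb_forall_in; apply: (iffP existsP).
  case=> _ /andP[/rcosetsP[x Gx ->]]; rewrite negbK rcoset_fixedE.
  by exists x.
case=> x Gx Hxg; exists (H :* x).
by rewrite negbK rcoset_fixedE Hxg andbT; apply/rcosetsP; exists x.
Qed.

Lemma morphim_nderangement {aT rT : finGroupType} {D : {group aT}}
    {f : {morphism D >-> rT}} {G H : {group aT}} {g : aT} :
  G \subset D -> g \in G -> ~~ derangement G H g ->
  ~~ derangement (f @* G) (f @* H) (f g).
Proof.
move=> sGD Gg /derangementPn[x Gx Hxg]; apply/derangementPn.
have [Dx Dg] := (subsetP sGD x Gx, subsetP sGD g Gg).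
exists (f x); first exact: mem_morphim.
by rewrite -morphV // -!morphM ?groupM ?groupV // mem_morphim // !groupM ?groupV.
Qed.

Lemma sdprod_coset_lift {gT : finGroupType} {X N K : {group gT}}
    {gb : coset_of N} :
  N ><| K = X -> gb \in X / N ->
  exists2 g, g \in K & coset N g = gb /\ #[g] = #[gb].
Proof.
case/sdprod_isom=> nNK /isomP[injf imK]; rewrite -imK => /morphimP[g _ Kg ->].
by exists g; rewrite // (order_injm injf).
Qed.

Lemma p_elusive_quotient_sdprod {gT : finGroupType} {p : nat}
    {X Y N K : {group gT}} :
  N ><| K = X -> p_elusive p X Y -> p_elusive p (X / N) (Y / N).
Proof.
move=> defX /forall_inP elX.
apply/forall_inP => _ /(sdprod_coset_lift defX)[g Kg [<- og]].
have [/andP[_ nNX] sKX _ _ _] := sdprod_context defX.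
have Xg : g \in X := subsetP sKX g Kg.
apply/implyP => ogp; apply: (morphim_nderangement nNX Xg).
by apply: (implyP (elX g Xg)); rewrite og.
Qed.

Theorem lemma2p3 (gT : finGroupType) (p : nat) (X Y N : {group gT}) :
  prime p ->
  Y \subset X ->
  core_free Y X ->
  N <| X ->
  core_free (Y / N) (X / N) ->
  ~~ p_elusive p (X / N) (Y / N) ->
  p_elusive p X Y ->
  ~~ [splits X, over N].
Proof.
move=> _ _ _ nsNX _ /negP notElXN elX.
apply/negP => /splitsP[K]; rewrite complgC => /(sdprod_normal_complP nsNX) defX.
exact/notElXN/(p_elusive_quotient_sdprod defX).
Qed.
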